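(* Let $\nu,\mu\in\mathbb{N}$, let $h>0$ and $r\in\mathbb{N}$ with $r\geq 1$. Let $\mathbf{F}_x\in\mathbb{R}^{\nu\times\nu}$, $\mathbf{F}_y\in\mathbb{R}^{\nu\times\mu}$, $\mathbf{G}_x\in\mathbb{R}^{\mu\times\nu}$, $\mathbf{G}_y\in\mathbb{R}^{\mu\times\mu}$ be the Jacobian matrices $\partial\mathbf f/\partial\mathbf x$, $\partial\mathbf f/\partial\mathbf y$, $\partial\mathbf g/\partial\mathbf x$, $\partial\mathbf g/\partial\mathbf y$ evaluated at an equilibrium $(\mathbf x_o,\mathbf y_o)$ of the system $\mathbf x'=\mathbf f(\mathbf x,\mathbf y)$, $\mathbf 0=\mathbf g(\mathbf x,\mathbf y)$. Suppose vectors $\tilde{\mathbf x}_n,\tilde{\mathbf x}_{n+1},\tilde{\boldsymbol\xi}^{(0)}_{n+1},\dots,\tilde{\boldsymbol\xi}^{(r)}_{n+1}\in\mathbb{R}^{\nu}$ and $\tilde{\mathbf y}_n,\tilde{\mathbf y}_{n+1},\tilde{\mathbf y}_{\rm int}\in\mathbb{R}^{\mu}$ satisfy the linearized Heun predictor-corrector equations $$\tilde{\boldsymbol\xi}^{(0)}_{n+1}=\tilde{\mathbf x}_n+h(\mathbf F_x\tilde{\mathbf x}_n+\mathbf F_y\tilde{\mathbf y}_n),$$ $$\tilde{\boldsymbol\xi}^{(i)}_{n+1}=\tilde{\mathbf x}_n+\tfrac{h}{2}\big[\mathbf F_x\tilde{\mathbf x}_n+\mathbf F_x\tilde{\boldsymbol\xi}^{(i-1)}_{n+1}+\mathbf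 F_y(\tilde{\mathbf y}_n+\tilde{\mathbf y}_{\rm int})\big],\quad i=1,\dots,r,$$ $$\tilde{\mathbf x}_{n+1}=\tilde{\boldsymbol\xi}^{(r)}_{n+1},\qquad \mathbf 0=\mathbf G_x\tilde{\mathbf x}_{n+1}+\mathbf G_y\tilde{\mathbf y}_{n+1}.$$ For $m\in\mathbb{N}$ define $\mathbf C_m=\sum_{j=0}^{m}\big(\tfrac{h}{2}\mathbf F_x\big)^j$ (so $\mathbf C_0=\mathbf I$). Then $$\begin{bmatrix}\mathbf I&\mathbf 0\\ \mathbf G_x&\mathbf G_y\end{bmatrix}\begin{bmatrix}\tilde{\mathbf x}_{n+1}\\ \tilde{\mathbf y}_{n+1}\end{bmatrix}=\begin{bmatrix}\mathbf I+h\mathbf C_r\mathbf F_x & \big(h\mathbf C_r-\tfrac{h}{2}\mathbf C_{r-1}\big)\mathbf F_y\\ \mathbf 0&\mathbf 0\end{bmatrix}\begin{bmatrix}\tilde{\mathbf x}_n\\ \tilde{\mathbf y}_n\end{bmatrix}+\begin{bmatrix}\tfrac{h}{2}\mathbf C_{r-1}\mathbf F_y\tilde{\mathbf y}_{\rm int}\\ \mathbf 0\end{bmatrix}.$$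
   Context: Setting: a power system model is a differential-algebraic system $\mathbf x'(t)=\mathbf f(\mathbf x(t),\mathbf y(t))$, $\mathbf 0=\mathbf g(\mathbf x(t),\mathbf y(t))$ with states $\mathbf x\in\mathbb{R}^\nu$, algebraic variables $\mathbf y\in\mathbb{R}^\mu$, and $\mathbf f,\mathbf g$ differentiable; $(\mathbf x_o,\mathbf y_o)$ is an equilibrium ($\mathbf f(\mathbf x_o,\mathbf y_o)=\mathbf 0$, $\mathbf g(\mathbf x_o,\mathbf y_o)=\mathbf 0$). Heun's method in the partitioned-solution approach with time step $h$ and $r$ corrector steps computes $\boldsymbol\xi^{(0)}_{n+1}=\mathbf x_n+h\mathbf f(\mathbf x_n,\mathbf y_n)$, $\boldsymbol\xi^{(i)}_{n+1}=\mathbf x_n+0.5h\,\mathbf f(\mathbf x_n,\mathbf y_n)+0.5h\,\mathbf f(\boldsymbol\xi^{(i-1)}_{n+1},\mathbf y_{\rm int})$, $\mathbf x_{n+1}=\boldsymbol\xi^{(r)}_{n+1}$, $\mathbf 0=h\,\mathbf g(\mathbf x_{n+1},\mathbf y_{n+1})$, where $\mathbf y_{\rm int}$ is a known value substituted for the not-yet-computed $\mathbf y_{n+1}$ (the ''interface'' value). Tildes denote deviations from the equilibrium ($\tilde{\mathbf x}_n=\mathbf x_n-\mathbf x_o$, etc.); the displayed equations in the claim are the linearization of this scheme at $(\mathbf x_o,\mathbf y_o)$. $\mathbf I$ is the identity and $\mathbf 0$ the zero matrix of appropriate dimensions. *)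

From mathcomp Require Import all_boot all_order all_algebra.
From mathcomp Require Import reals.
Set Implicit Arguments. Unset Strict Implicit. Unset Printing Implicit Defensive.
Import Order.TTheory GRing.Theory Num.Theory.
Local Open Scope ring_scope.

Definition Cmat (R : realType) (nu : nat) (h : R) (Fx : 'M[R]_nu) (m : nat)
  : 'M[R]_nu :=
  \sum_(j < m.+1) ((h / 2) *: Fx) ^+ j.

From mathcomp Require Import all_boot all_order all_algebra.
From mathcomp Require Import reals ring.
Import Order.TTheory GRing.Theory Num.Theory.
Set Implicit Arguments. Unset Strict Implicit.
Local Open Scope ring_scope.

(** The corrector is the affine iteration xi_{i+1} = b + A xi_i with A = (h/2) Fx, so
    after i steps the Fx-part is carried by the partial geometric sum C_i.  Splitting the
    y-contributions into their (yn + yint) and (yn - yint) parts gives a closed form valid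
    for every i, including the predictor i = 0; at i = r the identity C_r = C_{r-1} + A^r
    turns it into the stated block form, whose second row is the algebraic equation. *)

Section HeunCorrector.

Variables (R : realType) (nu mu : nat) (h : R).
Variables (Fx : 'M[R]_nu) (Fy : 'M[R]_(nu, mu)).

Local Notation A := ((h / 2) *: Fx).
Local Notation C := (Cmat h Fx).

Lemma CmatSl m : C m.+1 = 1%:M + A *m C m.
Proof.
rewrite /Cmat big_ord_recl expr0 mulmx_sumr; congr (_ + _).
by apply: eq_bigr => j _; rewrite exprS mulmxE.
Qed.

Lemma CmatSr m : C m.+1 = C m + A ^+ m.+1.
Proof. by rewrite /Cmat big_ord_recr. Qed.

Variables (r : nat) (xn : 'cV[R]_nu) (xi : nat -> 'cV[R]_nu) (yn yint : 'cV[R]_mu).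

Hypothesis predictor : xi 0%N = xn + h *: (Fx *m xn + Fy *m yn).
Hypothesis corrector : forall i : nat, (1 <= i <= r)%N ->
  xi i = xn + (h / 2) *: (Fx *m xn + Fx *m xi i.-1 + Fy *m (yn + yint)).

Lemma heun_iterate_closed_form i : (i <= r)%N ->
  xi i = xn + h *: (C i *m Fx *m xn) + (h / 2) *: (C i *m Fy *m (yn + yint))
         + (h / 2) *: (A ^+ i *m Fy *m (yn - yint)).
Proof.
elim: i => [_|i IHi lt_ir].
  rewrite predictor /Cmat big_ord1 expr0 !mul1mx.
  rewrite !(mulmxDr, mulmxN, scalerDr, scalerN).
  by apply/matrixP => a b; rewrite !mxE; field.
rewrite corrector ?lt_ir // (IHi (ltnW lt_ir)) CmatSl exprS -mulmxE.
rewrite !(mulmxDl, mulmxDr, mulmxN, mul1mx, scalerDr, scalerN).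
rewrite -!mulmxA -!scalemxAl -!scalemxAr !scalerA.
by apply/matrixP => a b; rewrite !mxE; field.
Qed.

End HeunCorrector.

Theorem mainTheorem1 (R : realType) (nu mu : nat) (h : R) (r : nat)
  (Fx : 'M[R]_nu) (Fy : 'M[R]_(nu, mu)) (Gx : 'M[R]_(mu, nu)) (Gy : 'M[R]_mu)
  (xn xn1 : 'cV[R]_nu) (xi : nat -> 'cV[R]_nu) (yn yn1 yint : 'cV[R]_mu) :
  0 < h -> (1 <= r)%N ->
  xi 0%N = xn + h *: (Fx *m xn + Fy *m yn) ->
  (forall i : nat, (1 <= i <= r)%N ->
     xi i = xn + (h / 2) *: (Fx *m xn + Fx *m xi i.-1 + Fy *m (yn + yint))) ->
  xn1 = xi r ->
  0 = Gx *m xn1 + Gy *m yn1 ->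
  block_mx 1%:M 0 Gx Gy *m col_mx xn1 yn1 =
    block_mx (1%:M + h *: (Cmat h Fx r *m Fx))
             ((h *: Cmat h Fx r - (h / 2) *: Cmat h Fx r.-1) *m Fy)
             (0 : 'M[R]_(mu, nu)) (0 : 'M[R]_(mu, mu))
      *m col_mx xn yn
    + col_mx ((h / 2) *: (Cmat h Fx r.-1 *m Fy *m yint)) (0 : 'cV[R]_mu).
Proof.
move=> _ r_gt0 predictor corrector -> algebraic.
rewrite !mul_block_col add_col_mx !mul0mx !addr0 -algebraic mul1mx; congr col_mx.
rewrite (heun_iterate_closed_form predictor corrector (leqnn r)).
case: r r_gt0 {corrector algebraic} => // r _ /=.
rewrite CmatSr !(mulmxDl, mulmxBl, mulmxDr, mulmxN, mulNmx, mul1mx, scalerDr, scalerN).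
rewrite -!scalemxAl -!mulmxA.
by apply/matrixP => a b; rewrite !mxE; field.
Qed.
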